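(* For $i,j\in I^+$ with $i\le j$, $[\mathfrak X_{-j_R},[\mathfrak D_j,\Psi_i]_q]=0$ as operators on $\mathcal X$.
   Context: Let $\mathbf{k}$ be a field of characteristic $0$, $q\in\mathbf{k}$ invertible and not a root of unity, $n\ge2$, $I=\{-n,\dots,-1,1,\dots,n\}$, $I^+=\{1,\dots,n\}$, $\lambda=q-q^{-1}$, $[m]_q=\frac{q^m-q^{-m}}{q-q^{-1}}$, $[A,B]_v=AB-vBA$, $[A,B]=[A,B]_1$. The quantum symplectic space $\mathcal X$ is the $\mathbf{k}$-algebra generated by $x_i$ ($i\in I$) with relations $x_jx_i=qx_ix_j$ for $i<j$, $j\neq-i$, and $x_ix_{-i}=q^2x_{-i}x_i+q^2\lambda\Omega_{i+1}$ ($i\in I^+$), $\Omega_i=\sum_{j=i}^nq^{j-i}x_{-j}x_j$, $\Omega_{n+1}=0$; normal monomials $x^a=x_{-n}^{a_{-n}}\cdots x_{-1}^{a_{-1}}x_1^{a_1}\cdots x_n^{a_n}$ form a basis. Linear operators: $\partial_i.x^a=[a_i]_qx^{a-\varepsilon_i}$, $x_{i_L}.f=x_if$, $x_{i_R}.f=fx_i$, $\mu_i^{\pm1}.x^a=q^{\pm a_i}x^a$ ($i\in I$); products are compositions (rightmost first). For $i\in I^+$: $\tau_i=\prod_{j=i}^n\mu_j$, $\tau_{-i}=\prod_{j=-n}^{-i}\mu_j$, $\tau_{\pm(n+1)}=1$, $\Lambda_0=1$, $\Lambda_{-i}=\prod_{j=-i}^{-1}\mu_j$, $\Lambda_i=\prod_{j=1}^i\mu_j$,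 $\mathfrak D_{-i}=\mu_i\tau_{-i-1}^{-1}\partial_{-i}$, $\mathfrak D_i=\tau_1^{-1}\Lambda_{i-1}^{-1}\partial_i$, $\mathfrak X_{-i_L}=\mu_i^{-1}\mu_{-i}x_{-i_L}$, $\mathfrak X_{i_R}=\Lambda_i^2x_{i_R}$, $\Psi_{n+1}=0$, $\Psi_i=\tau_{-i}^2\sum_{j=i}^nq^{j-i}\tau_{-j}^{-2}\mathfrak X_{-j_L}\mathfrak X_{j_R}$, and $\mathfrak X_{-i_R}=q^i\Lambda_{1-i}^2(\mu_i^2\mathfrak X_{-i_L}+\lambda\mu_{-i}^2\Psi_{i+1}\mathfrak D_i)$. *)

From HB Require Import structures.
From mathcomp Require Import all_boot all_order all_algebra.
Set Implicit Arguments. Unset Strict Implicit. Unset Printing Implicit Defensive.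
Import Order.TTheory GRing.Theory Num.Theory.
Local Open Scope ring_scope.

(* Index set I = {-n,...,-1,1,...,n} as integers, listed in the normal order
   -n < ... < -1 < 1 < ... < n. *)
Definition Iseq (n : nat) : seq int :=
  [seq - (k%:Z) | k <- rev (iota 1 n)] ++ [seq k%:Z | k <- iota 1 n].

Section QSymp.
Variables (k : fieldType) (A : algType k) (n : nat) (q : k).

Definition qlam : k := q - q^-1.
Definition qnum (m : nat) : k := (q ^+ m - q^-1 ^+ m) / (q - q^-1).

(* generators x_i (only i in I matter) *)
Variable x : int -> A.

Definition Omega (i : nat) : A :=
  \sum_(j <- iota i (n.+1 - i)) q ^+ (j - i) *: (x (- (j%:Z)) * x (j%:Z)).

Definition mono (a : int -> nat) : A := \prod_(i <- Iseq n) x i ^+ a i.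

Definition subeps (a : int -> nat) (i : int) : int -> nat :=
  fun j => if j == i then (a i).-1 else a j.

Definition qsymp_relations : Prop :=
  (forall i j, i \in Iseq n -> j \in Iseq n -> i < j -> j != - i ->
      x j * x i = q *: (x i * x j)) /\
  (forall i : nat, (1 <= i <= n)%N ->
      x (i%:Z) * x (- (i%:Z)) =
        q ^+ 2 *: (x (- (i%:Z)) * x (i%:Z)) + (q ^+ 2 * qlam) *: Omega i.+1).

Definition normal_monomials_basis : Prop :=
  (forall f : A, exists (m : nat) (a : 'I_m -> int -> nat) (c : 'I_m -> k),
      f = \sum_(u < m) c u *: mono (a u)) /\
  (forall (m : nat) (a : 'I_m -> int -> nat) (c : 'I_m -> k),
      (forall u v : 'I_m, u != v -> exists2 i, i \in Iseq n & a u i != a v i) ->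
      \sum_(u < m) c u *: mono (a u) = 0 -> forall u, c u = 0).

(* Basic operators: mu_i, mu_i^{-1}, partial_i, given by their (linear) action
   on normal monomials. *)
Variables (mu mui dp : int -> A -> A).

Definition basic_operators_spec : Prop :=
  forall i, i \in Iseq n ->
    [/\ linear (mu i), linear (mui i) & linear (dp i)] /\
    [/\ forall a, mu i (mono a) = q ^+ (a i) *: mono a,
        forall a, mui i (mono a) = q^-1 ^+ (a i) *: mono a &
        forall a, dp i (mono a) = qnum (a i) *: mono (subeps a i)].

(* operator algebra on A (operators are functions A -> A, products are
   compositions, rightmost first) *)
Definition sqop (F : A -> A) : A -> A := F \o F.
Definition muprod (m : int -> A -> A) (s : seq int) : A -> A :=
  foldr (fun j F => m j \o F) id s.
Definition Lmul (a : A) : A -> A := fun f => a * f.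
Definition Rmul (a : A) : A -> A := fun f => f * a.
Definition qcomm (v : k) (F G : A -> A) : A -> A :=
  fun f => F (G f) - v *: G (F f).

Definition tau_set (i : int) : seq int :=
  if 0 < i then [seq j <- Iseq n | i <= j] else [seq j <- Iseq n | j <= i].
Definition tau (i : int) := muprod mu (tau_set i).
Definition tauinv (i : int) := muprod mui (tau_set i).

Definition Lam_set (i : int) : seq int :=
  if 0 < i then [seq j <- Iseq n | (1 <= j) && (j <= i)]
  else [seq j <- Iseq n | (i <= j) && (j <= -1)].
Definition Lam (i : int) := muprod mu (Lam_set i).
Definition Laminv (i : int) := muprod mui (Lam_set i).

(* For i in I^+ (given as a nat 1 <= i <= n): *)
Definition Dneg (i : nat) : A -> A :=
  mu (i%:Z) \o tauinv (- (i%:Z) - 1) \o dp (- (i%:Z)).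
Definition Dpos (i : nat) : A -> A :=
  tauinv 1 \o Laminv (i%:Z - 1) \o dp (i%:Z).
Definition XLneg (i : nat) : A -> A :=
  mui (i%:Z) \o mu (- (i%:Z)) \o Lmul (x (- (i%:Z))).
Definition XRpos (i : nat) : A -> A :=
  sqop (Lam (i%:Z)) \o Rmul (x (i%:Z)).
Definition Psi (i : nat) : A -> A :=
  fun f => sqop (tau (- (i%:Z)))
    (\sum_(j <- iota i (n.+1 - i))
        q ^+ (j - i) *: sqop (tauinv (- (j%:Z))) (XLneg j (XRpos j f))).
Definition XRneg (i : nat) : A -> A :=
  fun f => q ^+ i *: sqop (Lam (1 - i%:Z))
    (sqop (mu (i%:Z)) (XLneg i f)
     + qlam *: sqop (mu (- (i%:Z))) (Psi i.+1 (Dpos i f))).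

End QSymp.

From Pilot Require Import Defs.
From HB Require Import structures.
From mathcomp Require Import all_boot all_order all_algebra.
From mathcomp Require Import zify ring.
From Stdlib Require Import FunctionalExtensionality.
Set Implicit Arguments. Unset Strict Implicit. Unset Printing Implicit Defensive.
Import Order.TTheory GRing.Theory Num.Theory.
Local Open Scope ring_scope.

(* Every operator involved sends a normal monomial x^a to a multiple of another
   normal monomial, the coefficient being a power of q times q-integers [a_p]_q.
   Write Psi_i = sum_(l >= i) q^(l-i) Psi_(i,l) and
   X_{-j_R} = P_j + sum_(m > j) c_m Q_(j,m) accordingly ([Psi_term], [XRneg_lead],
   [XRneg_tail]), so that [D_j, Psi_i]_q = sum_l q^(l-i) K_l with
   K_l = [D_j, Psi_(i,l)]_q.  For l > j, D_j and Psi_(i,l) q-commute, so K_l = 0.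
   For l < j, P_j and Q_(j,m) q-commute with D_j and with Psi_(i,l) by mutually
   inverse powers of q, hence commute with K_l.  For l = j, the identity
   [c+1]_q - q [c]_q = q^(-c) makes K_j itself a monomial operator, which commutes
   with P_j and every Q_(j,m).  On monomials each of these q-commutations reduces
   to an identity between exponents of q. *)

Lemma sorted_filter_split d (T : orderType d) (s : seq T) (p : T) :
  sorted <%O s ->
  s = [seq t <- s | (t < p)%O] ++ [seq t <- s | t == p] ++ [seq t <- s | (p < t)%O].
Proof.
elim: s => //= h s IH hs.
have gt_h : all (fun t => (h < t)%O) s := order_path_min lt_trans hs.
have filter_nil (P : pred T) : (forall t, (h < t)%O -> ~~ P t) -> [seq t <- s | P t] = [::].
  move=> hP; apply/eqP; rewrite -size_eq0 size_filter -leqn0 leqNgt -has_count.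
  by apply/hasPn => t /(allP gt_h)/hP.
have not_lt t : (h < t)%O -> (p <= h)%O -> ~~ (t < p)%O.
  by move=> ht hp; rewrite -leNgt ltW // (le_lt_trans hp).
case: (ltgtP h p) => [hp | hp | eq_hp] /=.
- by rewrite {1}(IH (path_sorted hs)).
- have gt_p t : (h < t)%O -> (p < t)%O by exact: lt_trans.
  rewrite (filter_nil _ (fun t ht => not_lt t ht (ltW hp))).
  rewrite (filter_nil (pred1 p) (fun t ht => negbT (gt_eqF (gt_p t ht)))).
  by congr (_ :: _); apply/esym/all_filterP/allP => t /(allP gt_h)/gt_p.
- subst p; rewrite (filter_nil _ (fun t ht => not_lt t ht (lexx h))).
  rewrite (filter_nil (pred1 h) (fun t ht => negbT (gt_eqF ht))).
  by rewrite (all_filterP gt_h).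
Qed.

Section LinearFunctions.
Variables (R : pzRingType) (U V W : lmodType R).
Implicit Types (f : U -> V) (g : V -> W).

Lemma linear_fun0 f : linear f -> f 0 = 0.
Proof. by move=> lf; have := lf (-1) 0 0; rewrite scaler0 addr0 scaleN1r addNr. Qed.

Lemma linear_funD f : linear f -> forall u v, f (u + v) = f u + f v.
Proof. by move=> lf u v; have := lf 1 u v; rewrite !scale1r. Qed.

Lemma linear_funZ f : linear f -> forall c u, f (c *: u) = c *: f u.
Proof. by move=> lf c u; have := lf c u 0; rewrite !addr0 (linear_fun0 lf) addr0. Qed.

Lemma linear_funB f : linear f -> forall u v, f (u - v) = f u - f v.
Proof. by move=> lf u v; rewrite (linear_funD lf) -scaleN1r (linear_funZ lf) scaleN1r. Qed.

Lemma linear_fun_sum f : linear f -> forall (I : Type) (r : seq I) (P : pred I) (F : I -> U),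
  f (\sum_(i <- r | P i) F i) = \sum_(i <- r | P i) f (F i).
Proof.
move=> lf I r P F; elim: r => [|i r IH]; first by rewrite !big_nil (linear_fun0 lf).
by rewrite !big_cons; case: (P i); rewrite ?(linear_funD lf) IH.
Qed.

Lemma linear_comp g f : linear g -> linear f -> linear (g \o f).
Proof. by move=> lg lf c u v /=; rewrite lf lg. Qed.

Lemma linear_add f1 f2 : linear f1 -> linear f2 -> linear (fun u => f1 u + f2 u).
Proof. by move=> l1 l2 c u v; rewrite l1 l2 scalerDr addrACA. Qed.

Lemma linear_sub f1 f2 : linear f1 -> linear f2 -> linear (fun u => f1 u - f2 u).
Proof. by move=> l1 l2 c u v; rewrite l1 l2 scalerBr opprD addrACA. Qed.

End LinearFunctions.

Lemma linear_scale (R : comPzRingType) (U V : lmodType R) (c : R) (f : U -> V) :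
  linear f -> linear (fun u => c *: f u).
Proof. by move=> lf d u v; rewrite lf scalerDr !scalerA mulrC. Qed.

Lemma linear_sum_scale (R : comPzRingType) (U V : lmodType R) (I : eqType) (r : seq I)
    (c : I -> R) (F : I -> U -> V) :
  {in r, forall i, linear (F i)} -> linear (fun u => \sum_(i <- r) c i *: F i u).
Proof.
elim: r => [_ d u v|i r IH lF d u v]; first by rewrite !big_nil scaler0 addr0.
rewrite !big_cons lF ?mem_head // IH => [|j rj]; last by apply: lF; rewrite in_cons rj orbT.
by rewrite scalerDr scalerDr !scalerA mulrC addrACA.
Qed.

Section QCommuting.
Variables (R : comPzRingType) (B : algType R) (c : R) (y z : B).
Hypothesis yz : y * z = c *: (z * y).

Lemma qcomm_exprr m : y * z ^+ m = c ^+ m *: (z ^+ m * y).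
Proof.
elim: m => [|m IH]; first by rewrite !expr0 mulr1 mul1r scale1r.
by rewrite [in LHS]exprS mulrA yz -scalerAl -[in LHS]mulrA IH -scalerAr scalerA mulrA -!exprS.
Qed.

Lemma qcomm_exprl m : y ^+ m * z = c ^+ m *: (z * y ^+ m).
Proof.
elim: m => [|m IH]; first by rewrite !expr0 mulr1 mul1r scale1r.
by rewrite [in LHS]exprSr -mulrA yz -scalerAr mulrA IH -scalerAl scalerA -mulrA -exprSr -exprS.
Qed.

End QCommuting.

Section QCommutingProd.
Variables (R : comPzRingType) (B : algType R) (c : R) (y : B) (I : eqType) (s : seq I).
Variables (z : I -> B) (e : I -> nat).

Lemma qcomm_prodr : {in s, forall t, y * z t = c *: (z t * y)} ->
  y * \prod_(t <- s) z t ^+ e t = c ^+ (\sum_(t <- s) e t)%N *: (\prod_(t <- s) z t ^+ e t * y).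
Proof.
elim: s => [|t s' IH] yz; first by rewrite !big_nil mulr1 mul1r expr0 scale1r.
rewrite !big_cons mulrA (qcomm_exprr (yz t (mem_head _ _))) -scalerAl -[in LHS]mulrA.
rewrite IH => [|u su]; last by apply: yz; rewrite in_cons su orbT.
by rewrite -scalerAr scalerA -exprD [in LHS]mulrA.
Qed.

Lemma qcomm_prodl : {in s, forall t, z t * y = c *: (y * z t)} ->
  \prod_(t <- s) z t ^+ e t * y = c ^+ (\sum_(t <- s) e t)%N *: (y * \prod_(t <- s) z t ^+ e t).
Proof.
elim: s => [|t s' IH] zy; first by rewrite !big_nil mulr1 mul1r expr0 scale1r.
rewrite !big_cons -mulrA IH => [|u su]; last by apply: zy; rewrite in_cons su orbT.
rewrite -scalerAr [in LHS]mulrA (qcomm_exprl (zy t (mem_head _ _))).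
by rewrite -scalerAl scalerA -exprD -[in LHS]mulrA addnC.
Qed.

End QCommutingProd.

Section CommuteQcomm.
Variables (k : fieldType) (A : algType k) (F G H : A -> A) (c1 c2 v : k).
Hypotheses (lF : linear F) (lG : linear G) (lH : linear H) (c12 : c1 * c2 = 1).

Lemma linear_qcomm : linear (qcomm v G H).
Proof.
by apply: linear_sub; [exact: linear_comp | apply: linear_scale; exact: linear_comp].
Qed.

Lemma commute_qcomm :
  (forall f, F (G f) = c1 *: G (F f)) -> (forall f, F (H f) = c2 *: H (F f)) ->
  forall f, F (qcomm v G H f) = qcomm v G H (F f).
Proof.
move=> FG FH f; rewrite /qcomm (linear_funB lF) (linear_funZ lF) FG !FH FG.
by rewrite (linear_funZ lG) (linear_funZ lH) !scalerA -mulrA [c2 * c1]mulrC c12 mulr1 scale1r.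
Qed.

End CommuteQcomm.

Lemma linear_Lmul (k : fieldType) (A : algType k) (y : A) : linear (Lmul y).
Proof. by move=> c u v; rewrite /Lmul mulrDr scalerAr. Qed.

Lemma linear_Rmul (k : fieldType) (A : algType k) (y : A) : linear (Rmul y).
Proof. by move=> c u v; rewrite /Rmul mulrDl scalerAl. Qed.

Lemma Iseq_sorted n : sorted <%R (Iseq n).
Proof.
rewrite lt_sorted_pairwise /Iseq pairwise_cat; apply/and3P; split.
- apply/allrelP => u v /mapP[a /[!mem_rev] /[!mem_iota] ha ->] /mapP[b /[!mem_iota] hb ->].
  lia.
- rewrite pairwise_map -sorted_pairwise; last by move=> a b c /=; lia.
  rewrite rev_sorted; apply: sub_sorted (iota_ltn_sorted 1 n) => a b /=; lia.
- rewrite pairwise_map -sorted_pairwise; last by move=> a b c /=; lia.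
  apply: sub_sorted (iota_ltn_sorted 1 n) => a b /=; lia.
Qed.

Lemma Iseq_uniq n : uniq (Iseq n).
Proof. exact: (sorted_uniq lt_trans ltxx (Iseq_sorted n)). Qed.

Lemma mem_Iseq n (t : int) : (t \in Iseq n) = (t != 0) && (`|t|%N <= n)%N.
Proof.
rewrite /Iseq mem_cat; apply/orP/andP.
- by case=> /mapP[b]; rewrite ?mem_rev mem_iota => hb ->; lia.
- case: t => m [h1 h2]; [right | left].
  + by apply/mapP; exists m; rewrite ?mem_iota //; lia.
  + by apply/mapP; exists m.+1; rewrite ?mem_rev ?mem_iota //; lia.
Qed.

Lemma count_mem_filter_Iseq n (P : pred int) p :
  count_mem p [seq t <- Iseq n | P t] = P p && (p \in Iseq n).
Proof.
rewrite count_filter; case: (boolP (P p)) => hP /=.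
  rewrite -(count_uniq_mem _ (Iseq_uniq n)); apply: eq_count => t /=.
  by case: eqP => // ->.
rewrite (eq_count (a2 := pred0)) ?count_pred0 // => t /=.
by case: eqP => // ->; apply: negbTE.
Qed.

Lemma tau_set_sub n z : {subset tau_set n z <= Iseq n}.
Proof. by rewrite /tau_set; case: ifP => _ t; rewrite mem_filter => /andP[]. Qed.

Lemma Lam_set_sub n z : {subset Lam_set n z <= Iseq n}.
Proof. by rewrite /Lam_set; case: ifP => _ t; rewrite mem_filter => /andP[]. Qed.

Lemma count_mem_tau_set n p z : count_mem p (tau_set n z) =
  ((0 < z) && (z <= p) || ~~ (0 < z) && (p <= z)) && (p \in Iseq n).
Proof. by rewrite /tau_set; case: ifP => z0; rewrite count_mem_filter_Iseq ?orbF. Qed.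

Lemma count_mem_Lam_set n p z : count_mem p (Lam_set n z) =
  ((0 < z) && (1 <= p <= z) || ~~ (0 < z) && (z <= p <= -1)) && (p \in Iseq n).
Proof. by rewrite /Lam_set; case: ifP => z0; rewrite count_mem_filter_Iseq ?orbF. Qed.

Definition addeps (a : int -> nat) (p : int) : int -> nat := fun t => (a t + (t == p))%N.
Definition expsum (a : int -> nat) (s : seq int) : int := \sum_(t <- s) (a t)%:Z.

Lemma expsumE a s : expsum a s = (\sum_(t <- s) a t)%N.
Proof. by rewrite /expsum (big_morph Posz PoszD erefl). Qed.

Lemma expsum_addeps a p s : expsum (addeps a p) s = expsum a s + (count_mem p s)%:Z.
Proof.
rewrite /expsum /addeps; under eq_bigr do rewrite PoszD.
rewrite big_split /=; congr (_ + _).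
by elim: s => [|t s IH]; rewrite ?big_nil ?big_cons //= IH eq_sym PoszD.
Qed.

Lemma addepsK a p : subeps (addeps a p) p = a.
Proof.
apply: functional_extensionality => t; rewrite /addeps /subeps.
by case: eqP => [->|_]; rewrite ?addn0 // eqxx addn1.
Qed.

Lemma subeps_addeps a p r : p != r -> subeps (addeps a p) r = addeps (subeps a r) p.
Proof.
move=> ne; apply: functional_extensionality => t; rewrite /addeps /subeps.
by case: eqP => [->|_] //; rewrite eq_sym (negbTE ne) !addn0.
Qed.

Lemma addeps_cases a p : a p = 0%N \/ exists b, a = addeps b p.
Proof.
case: (posnP (a p)) => [|a_gt0]; [by left | right; exists (subeps a p)].
apply: functional_extensionality => t; rewrite /addeps /subeps.
by case: eqP => [->|_]; rewrite ?addn0 // addn1 prednK.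
Qed.

Section QSympOperators.
Variables (k : fieldType) (A : algType k) (n : nat) (q : k) (x : int -> A).
Hypothesis q_neq0 : q != 0.
Hypothesis q2_neq1 : q ^+ 2 != 1.
Hypothesis basis : normal_monomials_basis n x.

Local Notation mono := (mono n x).

Lemma qnum0 : qnum q 0 = 0.
Proof. by rewrite /qnum !expr0 subrr mul0r. Qed.

Lemma qlam_neq0 : q - q^-1 != 0.
Proof.
apply: contraNneq q2_neq1 => /eqP; rewrite subr_eq0 => /eqP qV.
by rewrite expr2 {2}qV mulfV.
Qed.

Lemma qnum1 : qnum q 1 = 1.
Proof. by rewrite /qnum !expr1 mulfV // qlam_neq0. Qed.

Lemma qnumS_sub c : qnum q c.+1 - q * qnum q c = q ^ (- c%:Z).
Proof.
have -> : q ^ (- c%:Z) = q^-1 ^+ c by rewrite exprVn exprnP invr_expz.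
by rewrite /qnum !exprS; field; rewrite q_neq0 -expr2 subr_eq0.
Qed.

Lemma qnumS_sub_eq (e1 e2 e : int) (c1 c2 c : nat) :
  e2 = e1 -> c1 = c.+1 -> c2 = c -> e = e1 - c%:Z ->
  q ^ e1 * qnum q c1 - q * (q ^ e2 * qnum q c2) = q ^ e.
Proof.
by move=> -> -> -> ->; rewrite [q * _]mulrCA -mulrBr qnumS_sub -expfzDr.
Qed.

Definition qnum_prod (cs : seq nat) : k := \prod_(c <- cs) qnum q c.

Lemma qnum_prod0 cs : 0%N \in cs -> qnum_prod cs = 0.
Proof. by move=> cs0; rewrite /qnum_prod (big_rem 0%N) //= qnum0 mul0r. Qed.

Lemma linear_monomial_ext (F G : A -> A) :
  linear F -> linear G -> (forall a, F (mono a) = G (mono a)) -> F =1 G.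
Proof.
move=> lF lG FG f; have [m [a [c ->]]] := basis.1 f.
rewrite (linear_fun_sum lF) (linear_fun_sum lG); apply: eq_bigr => u _.
by rewrite (linear_funZ lF) (linear_funZ lG) FG.
Qed.

(* [cs a] lists the arguments of the q-integer factors; a factor [0]_q = 0 kills
   the term, which makes the meaningless shift [subeps a p] at [a p = 0] harmless. *)
Definition monomial_action (F : A -> A) (e : (int -> nat) -> int)
    (cs : (int -> nat) -> seq nat) (s : (int -> nat) -> int -> nat) :=
  forall a, F (mono a) = (q ^ e a * qnum_prod (cs a)) *: mono (s a).

Definition terms_match (v e1 e2 : int) (cs1 cs2 : seq nat) (s1 s2 : int -> nat) :=
  (0%N \in cs1) && (0%N \in cs2) \/ [/\ e1 = v + e2, cs1 = cs2 & s1 =1 s2].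

Lemma terms_matchE v e1 e2 cs1 cs2 s1 s2 : terms_match v e1 e2 cs1 cs2 s1 s2 ->
  (q ^ e1 * qnum_prod cs1) *: mono s1 = q ^ v *: ((q ^ e2 * qnum_prod cs2) *: mono s2).
Proof.
case=> [/andP[z1 z2] | [-> -> /functional_extensionality ->]].
  by rewrite !qnum_prod0 // !mulr0 !scale0r scaler0.
by rewrite scalerA mulrA expfzDr.
Qed.

Lemma monomial_action_ext F e1 e2 cs1 cs2 s1 s2 : monomial_action F e1 cs1 s1 ->
  (forall a, terms_match 0 (e1 a) (e2 a) (cs1 a) (cs2 a) (s1 a) (s2 a)) ->
  monomial_action F e2 cs2 s2.
Proof. by move=> hF h a; rewrite hF (terms_matchE (h a)) expr0z scale1r. Qed.

Lemma monomial_action_comp F G eF eG csF csG sF sG : linear F ->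
  monomial_action F eF csF sF -> monomial_action G eG csG sG ->
  monomial_action (F \o G) (fun a => eG a + eF (sG a)) (fun a => csG a ++ csF (sG a))
    (fun a => sF (sG a)).
Proof.
move=> lF hF hG a /=; rewrite hG (linear_funZ lF) hF scalerA expfzDr //.
by rewrite /qnum_prod big_cat mulrACA.
Qed.

Lemma monomial_action_scale F e cs s (m : nat) : monomial_action F e cs s ->
  monomial_action (fun f => q ^+ m *: F f) (fun a => m%:Z + e a) cs s.
Proof. by move=> hF a; rewrite hF scalerA mulrA exprnP -expfzDr. Qed.

Lemma monomial_actions_qcommute F G eF eG csF csG sF sG (v : int) :
  linear F -> linear G -> monomial_action F eF csF sF -> monomial_action G eG csG sG ->
  (forall a, terms_match v (eG a + eF (sG a)) (eF a + eG (sF a))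
     (csG a ++ csF (sG a)) (csF a ++ csG (sF a)) (sF (sG a)) (sG (sF a))) ->
  forall f, F (G f) = q ^ v *: G (F f).
Proof.
move=> lF lG hF hG h; apply: (linear_monomial_ext (F := F \o G)).
- exact: linear_comp.
- by apply: linear_scale; exact: linear_comp.
move=> a; have /= -> := monomial_action_comp lF hF hG a.
by have /= -> := monomial_action_comp lG hG hF a; exact: terms_matchE.
Qed.

Variables (mu mui dp : int -> A -> A).
Hypothesis operators : basic_operators_spec n q x mu mui dp.
Hypothesis relations : qsymp_relations n q x.

Lemma linear_mu p : p \in Iseq n -> linear (mu p).
Proof. by move=> hp; case: (operators hp) => -[]. Qed.

Lemma linear_mui p : p \in Iseq n -> linear (mui p).
Proof. by move=> hp; case: (operators hp) => -[]. Qed.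

Lemma linear_dp p : p \in Iseq n -> linear (dp p).
Proof. by move=> hp; case: (operators hp) => -[]. Qed.

Lemma mu_action p : p \in Iseq n ->
  monomial_action (mu p) (fun a => a p) (fun=> [::]) id.
Proof.
by move=> hp a; case: (operators hp) => _ [-> _ _]; rewrite /qnum_prod big_nil mulr1 exprnP.
Qed.

Lemma mui_action p : p \in Iseq n ->
  monomial_action (mui p) (fun a => - (a p)%:Z) (fun=> [::]) id.
Proof.
move=> hp a; case: (operators hp) => _ [_ -> _].
by rewrite /qnum_prod big_nil mulr1 exprVn exprnP invr_expz.
Qed.

Lemma dp_action p : p \in Iseq n ->
  monomial_action (dp p) (fun=> 0) (fun a => [:: a p]) (fun a => subeps a p).
Proof.
by move=> hp a; case: (operators hp) => _ [_ _ ->]; rewrite /qnum_prod big_seq1 expr0z mul1r.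
Qed.

Lemma linear_muprod (m : int -> A -> A) s : {in s, forall p, linear (m p)} -> linear (muprod m s).
Proof.
elim: s => [_ c u v //|p s IH lm] /=.
apply: linear_comp; first by apply: lm; rewrite mem_head.
by apply: IH => r rs; apply: lm; rewrite in_cons rs orbT.
Qed.

Lemma muprod_action (m : int -> A -> A) (w : int -> (int -> nat) -> int) s :
  {in s, forall p, linear (m p) /\ monomial_action (m p) (w p) (fun=> [::]) id} ->
  monomial_action (muprod m s) (fun a => \sum_(p <- s) w p a) (fun=> [::]) id.
Proof.
elim: s => [_ a | p s IH hm a] /=.
  by rewrite big_nil expr0z /qnum_prod big_nil mulr1 scale1r.
have [lp hp] := hm p (mem_head _ _).
rewrite IH => [|r rs]; last by apply: hm; rewrite in_cons rs orbT.
rewrite (linear_funZ lp) hp scalerA /qnum_prod big_nil !mulr1 big_cons -expfzDr //.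
by rewrite addrC.
Qed.

Lemma linear_sqop (F : A -> A) : linear F -> linear (sqop F).
Proof. by move=> lF; exact: linear_comp. Qed.

Lemma sqop_action F w : linear F -> monomial_action F w (fun=> [::]) id ->
  monomial_action (sqop F) (fun a => 2 * w a) (fun=> [::]) id.
Proof.
move=> lF hF; apply: monomial_action_ext (monomial_action_comp lF hF hF) _ => a.
by right; split => //; lia.
Qed.

Local Notation tau := (tau n mu).
Local Notation tauinv := (tauinv n mui).
Local Notation Lam := (Lam n mu).
Local Notation Laminv := (Laminv n mui).

Lemma linear_tau z : linear (tau z).
Proof. by apply: linear_muprod => p /tau_set_sub; exact: linear_mu. Qed.

Lemma linear_tauinv z : linear (tauinv z).
Proof. by apply: linear_muprod => p /tau_set_sub; exact: linear_mui. Qed.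

Lemma linear_Lam z : linear (Lam z).
Proof. by apply: linear_muprod => p /Lam_set_sub; exact: linear_mu. Qed.

Lemma linear_Laminv z : linear (Laminv z).
Proof. by apply: linear_muprod => p /Lam_set_sub; exact: linear_mui. Qed.

Lemma tau_action z :
  monomial_action (tau z) (fun a => expsum a (tau_set n z)) (fun=> [::]) id.
Proof.
apply: (muprod_action (w := fun p a => (a p)%:Z)) => p /tau_set_sub hp.
by split; [exact: linear_mu | exact: mu_action].
Qed.

Lemma tauinv_action z :
  monomial_action (tauinv z) (fun a => - expsum a (tau_set n z)) (fun=> [::]) id.
Proof.
apply: monomial_action_ext (muprod_action (w := fun p a => - (a p)%:Z) _) _.
  by move=> p /tau_set_sub hp; split; [exact: linear_mui | exact: mui_action].
by move=> a; right; split => //; rewrite add0r sumrN.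
Qed.

Lemma Lam_action z :
  monomial_action (Lam z) (fun a => expsum a (Lam_set n z)) (fun=> [::]) id.
Proof.
apply: (muprod_action (w := fun p a => (a p)%:Z)) => p /Lam_set_sub hp.
by split; [exact: linear_mu | exact: mu_action].
Qed.

Lemma Laminv_action z :
  monomial_action (Laminv z) (fun a => - expsum a (Lam_set n z)) (fun=> [::]) id.
Proof.
apply: monomial_action_ext (muprod_action (w := fun p a => - (a p)%:Z) _) _.
  by move=> p /Lam_set_sub hp; split; [exact: linear_mui | exact: mui_action].
by move=> a; right; split => //; rewrite add0r sumrN.
Qed.

Definition Iseq_lt p := [seq t <- Iseq n | t < p].
Definition Iseq_gt p := [seq t <- Iseq n | p < t].

Lemma mono_split a p : p \in Iseq n ->
  mono a = \prod_(t <- Iseq_lt p) x t ^+ a t * x p ^+ a p * \prod_(t <- Iseq_gt p) x t ^+ a t.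
Proof.
move=> hp; rewrite /Defs.mono {1}(sorted_filter_split p (Iseq_sorted n)) !big_cat.
by rewrite /= (filter_pred1_uniq (Iseq_uniq n) hp) big_seq1 mulrA.
Qed.

Lemma mono_addeps a p : p \in Iseq n -> mono (addeps a p) =
  \prod_(t <- Iseq_lt p) x t ^+ a t * x p ^+ (a p).+1 * \prod_(t <- Iseq_gt p) x t ^+ a t.
Proof.
move=> hp; rewrite (mono_split _ hp) /addeps eqxx addn1; congr (_ * _ * _).
  by apply: eq_big_seq => t; rewrite mem_filter => /andP[/lt_eqF -> _]; rewrite addn0.
by apply: eq_big_seq => t; rewrite mem_filter => /andP[/gt_eqF -> _]; rewrite addn0.
Qed.

Lemma Lmul_action (l : nat) : (1 <= l <= n)%N ->
  monomial_action (Lmul (x (- l%:Z))) (fun a => expsum a (Iseq_lt (- l%:Z))) (fun=> [::])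
    (fun a => addeps a (- l%:Z)).
Proof.
move=> hl a; have hp : - l%:Z \in Iseq n by rewrite mem_Iseq; lia.
have comm : {in Iseq_lt (- l%:Z), forall t, x (- l%:Z) * x t = q *: (x t * x (- l%:Z))}.
  move=> t; rewrite mem_filter => /andP[lt_t It].
  by apply: relations.1 => //; move: It; rewrite mem_Iseq; lia.
rewrite /Lmul (mono_split _ hp) (mono_addeps _ hp) !mulrA (qcomm_prodr _ comm).
by rewrite -!scalerAl exprS !mulrA expsumE exprnP /qnum_prod big_nil mulr1.
Qed.

Lemma Rmul_action (l : nat) : (1 <= l <= n)%N ->
  monomial_action (Rmul (x l%:Z)) (fun a => expsum a (Iseq_gt l%:Z)) (fun=> [::])
    (fun a => addeps a l%:Z).
Proof.
move=> hl a; have hp : l%:Z \in Iseq n by rewrite mem_Iseq; lia.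
have comm : {in Iseq_gt l%:Z, forall t, x t * x l%:Z = q *: (x l%:Z * x t)}.
  move=> t; rewrite mem_filter => /andP[gt_t It].
  by apply: relations.1 => //; move: It; rewrite mem_Iseq; lia.
rewrite /Rmul (mono_split _ hp) (mono_addeps _ hp) -!mulrA (qcomm_prodl _ comm).
by rewrite !scalerAr exprSr !mulrA expsumE exprnP /qnum_prod big_nil mulr1.
Qed.

Ltac push_subeps :=
  repeat (rewrite ?addepsK; rewrite subeps_addeps; last by lia); rewrite ?addepsK.

(* lia copes with the nested boolean count terms only once each is decided. *)
Ltac eval_bools :=
  repeat match goal with |- context[nat_of_bool ?b] =>
    lazymatch b with true => fail | false => fail | _ =>
    first [ have -> : b = true by lia | have -> : b = false by lia ] end end.

Ltac weight_lia := rewrite /= ?expsum_addeps ?count_mem_tau_set ?count_mem_Lam_set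
  /Iseq_lt /Iseq_gt ?count_mem_filter_Iseq ?mem_Iseq /addeps /=; eval_bools; lia.

Local Notation XLneg := (XLneg x mu mui).
Local Notation XRpos := (XRpos n x mu).
Local Notation Dpos := (Dpos n mui dp).

Lemma linear_XLneg (l : nat) : (1 <= l <= n)%N -> linear (XLneg l).
Proof.
move=> hl; apply: linear_comp; last exact: linear_Lmul.
by apply: linear_comp; [apply: linear_mui | apply: linear_mu]; rewrite mem_Iseq; lia.
Qed.

Lemma XLneg_action (l : nat) : (1 <= l <= n)%N -> monomial_action (XLneg l)
  (fun a => expsum a (Iseq_lt (- l%:Z)) + a (- l%:Z) + 1 - (a l%:Z)%:Z) (fun=> [::])
  (fun a => addeps a (- l%:Z)).
Proof.
move=> hl; have [hp hn] : l%:Z \in Iseq n /\ - l%:Z \in Iseq n by rewrite !mem_Iseq; lia.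
have muis := monomial_action_comp (linear_mui hp) (mui_action hp) (mu_action hn).
have := monomial_action_comp (linear_comp (linear_mui hp) (linear_mu hn)) muis (Lmul_action hl).
by move/monomial_action_ext; apply => a; right; split => //; weight_lia.
Qed.

Lemma linear_XRpos (l : nat) : linear (XRpos l).
Proof. by apply: linear_comp; [exact: linear_sqop (linear_Lam _) | exact: linear_Rmul]. Qed.

Lemma XRpos_action (l : nat) : (1 <= l <= n)%N -> monomial_action (XRpos l)
  (fun a => expsum a (Iseq_gt l%:Z) + 2 * expsum a (Lam_set n l%:Z) + 2) (fun=> [::])
  (fun a => addeps a l%:Z).
Proof.
move=> hl.
have := monomial_action_comp (linear_sqop (linear_Lam _))
  (sqop_action (linear_Lam _) (Lam_action l%:Z)) (Rmul_action hl).
by move/monomial_action_ext; apply => a; right; split => //; weight_lia.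
Qed.

Definition Psi_term (i l : nat) : A -> A :=
  sqop (tau (- i%:Z)) \o sqop (tauinv (- l%:Z)) \o XLneg l \o XRpos l.

Definition Psi_term_weight (i l : nat) (a : int -> nat) : int :=
  expsum a (Iseq_gt l%:Z) + 2 * expsum a (Lam_set n l%:Z) + expsum a (Iseq_lt (- l%:Z))
  + a (- l%:Z) - (a l%:Z)%:Z - 2 * expsum a (tau_set n (- l%:Z))
  + 2 * expsum a (tau_set n (- i%:Z)) + 2.

Lemma linear_Psi_term i (l : nat) : (1 <= l <= n)%N -> linear (Psi_term i l).
Proof.
move=> hl; apply: linear_comp _ (linear_XRpos l); apply: linear_comp _ (linear_XLneg hl).
exact: linear_comp (linear_sqop (linear_tau _)) (linear_sqop (linear_tauinv _)).
Qed.

Lemma Psi_term_action i l : (i <= l)%N -> (1 <= l <= n)%N ->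
  monomial_action (Psi_term i l) (Psi_term_weight i l) (fun=> [::])
    (fun a => addeps (addeps a l%:Z) (- l%:Z)).
Proof.
move=> il hl.
have taus := monomial_action_comp (linear_sqop (linear_tau _))
  (sqop_action (linear_tau _) (tau_action (- i%:Z)))
  (sqop_action (linear_tauinv _) (tauinv_action (- l%:Z))).
have XLR := monomial_action_comp (linear_XLneg hl) (XLneg_action hl) (XRpos_action hl).
have lin_taus : linear (sqop (tau (- i%:Z)) \o sqop (tauinv (- l%:Z))).
  exact: linear_comp (linear_sqop (linear_tau _)) (linear_sqop (linear_tauinv _)).
have := monomial_action_comp lin_taus taus XLR.
by move/monomial_action_ext; apply => a; right; split => //; rewrite /Psi_term_weight; weight_lia.
Qed.

Definition Dpos_weight (j : nat) (a : int -> nat) : int :=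
  1 - expsum a (Lam_set n (j%:Z - 1)) - expsum a (tau_set n 1).

Lemma linear_Dpos (j : nat) : (1 <= j <= n)%N -> linear (Dpos j).
Proof.
move=> hj; apply: linear_comp (linear_comp (linear_tauinv _) (linear_Laminv _)) (linear_dp _).
by rewrite mem_Iseq; lia.
Qed.

Lemma Dpos_action (j : nat) : (1 <= j <= n)%N ->
  monomial_action (Dpos j) (Dpos_weight j) (fun a => [:: a j%:Z]) (fun a => subeps a j%:Z).
Proof.
move=> hj; have hp : j%:Z \in Iseq n by rewrite mem_Iseq; lia.
have invs := monomial_action_comp (linear_tauinv _) (tauinv_action 1) (Laminv_action (j%:Z - 1)).
have := monomial_action_comp (linear_comp (linear_tauinv _) (linear_Laminv _)) invs (dp_action hp).
move/monomial_action_ext; apply => a; have [aj0 | [b ->]] := addeps_cases a j%:Z.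
  by left; rewrite /= !inE aj0.
by right; rewrite addepsK; split => //; rewrite /Dpos_weight; weight_lia.
Qed.

Definition XRneg_lead (j : nat) (f : A) : A :=
  q ^+ j *: sqop (Lam (1 - j%:Z)) (sqop (mu j%:Z) (XLneg j f)).

Definition XRneg_lead_weight (j : nat) (a : int -> nat) : int :=
  j%:Z + expsum a (Iseq_lt (- j%:Z)) + a (- j%:Z) + a j%:Z + 1
  + 2 * expsum a (Lam_set n (1 - j%:Z)).

Lemma linear_XRneg_lead (j : nat) : (1 <= j <= n)%N -> linear (XRneg_lead j).
Proof.
move=> hj; apply: linear_scale; apply: linear_comp (linear_sqop (linear_Lam _)) _.
by apply: linear_comp (linear_XLneg hj); apply/linear_sqop/linear_mu; rewrite mem_Iseq; lia.
Qed.

Lemma XRneg_lead_action (j : nat) : (1 <= j <= n)%N ->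
  monomial_action (XRneg_lead j) (XRneg_lead_weight j) (fun=> [::])
    (fun a => addeps a (- j%:Z)).
Proof.
move=> hj; have hp : j%:Z \in Iseq n by rewrite mem_Iseq; lia.
have mus := monomial_action_comp (linear_sqop (linear_Lam _))
  (sqop_action (linear_Lam _) (Lam_action (1 - j%:Z)))
  (sqop_action (linear_mu hp) (mu_action hp)).
have lin_mus : linear (sqop (Lam (1 - j%:Z)) \o sqop (mu j%:Z)).
  exact: linear_comp (linear_sqop (linear_Lam _)) (linear_sqop (linear_mu hp)).
have := monomial_action_scale j (monomial_action_comp lin_mus mus (XLneg_action hj)).
move/monomial_action_ext; apply => a; right; split => //.
by rewrite /XRneg_lead_weight; weight_lia.
Qed.

Definition XRneg_tail (j m : nat) (f : A) : A :=
  sqop (Lam (1 - j%:Z)) (sqop (mu (- j%:Z)) (Psi_term j.+1 m (Dpos j f))).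

Definition XRneg_tail_weight (j m : nat) (a : int -> nat) : int :=
  Dpos_weight j a + Psi_term_weight j.+1 m a - 2 + 2 * a (- j%:Z)
  + 2 * expsum a (Lam_set n (1 - j%:Z)).

Lemma linear_XRneg_tail (j m : nat) : (1 <= j <= n)%N -> (1 <= m <= n)%N ->
  linear (XRneg_tail j m).
Proof.
move=> hj hm; apply: linear_comp (linear_sqop (linear_Lam _)) _.
apply: linear_comp; first by apply/linear_sqop/linear_mu; rewrite mem_Iseq; lia.
exact: linear_comp (linear_Psi_term _ hm) (linear_Dpos hj).
Qed.

Lemma XRneg_tail_action (j m : nat) : (1 <= j)%N -> (j < m <= n)%N ->
  monomial_action (XRneg_tail j m) (XRneg_tail_weight j m) (fun a => [:: a j%:Z])
    (fun a => addeps (addeps (subeps a j%:Z) m%:Z) (- m%:Z)).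
Proof.
move=> j1 hjm; have [hj hm] : (1 <= j <= n)%N /\ (1 <= m <= n)%N by lia.
have hp : - j%:Z \in Iseq n by rewrite mem_Iseq; lia.
have mus := monomial_action_comp (linear_sqop (linear_Lam _))
  (sqop_action (linear_Lam _) (Lam_action (1 - j%:Z)))
  (sqop_action (linear_mu hp) (mu_action hp)).
have lin_mus : linear (sqop (Lam (1 - j%:Z)) \o sqop (mu (- j%:Z))).
  exact: linear_comp (linear_sqop (linear_Lam _)) (linear_sqop (linear_mu hp)).
have jm : (j.+1 <= m)%N by lia.
have PsiD := monomial_action_comp (linear_Psi_term _ hm) (Psi_term_action jm hm) (Dpos_action hj).
have := monomial_action_comp lin_mus mus PsiD.
move/monomial_action_ext; apply => a; have [aj0 | [b ->]] := addeps_cases a j%:Z.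
  by left; rewrite /= !inE aj0.
right; push_subeps; split => //.
by rewrite /XRneg_tail_weight /Dpos_weight /Psi_term_weight; weight_lia.
Qed.

Definition qcomm_Dpos_Psi_term_weight (i j : nat) (a : int -> nat) : int :=
  Psi_term_weight i j a - expsum a (Lam_set n (j%:Z - 1)) - expsum a (tau_set n 1)
  - (a j%:Z)%:Z.

Lemma qcomm_Dpos_Psi_term_action (i j : nat) : (i <= j)%N -> (1 <= j <= n)%N ->
  monomial_action (qcomm q (Dpos j) (Psi_term i j)) (qcomm_Dpos_Psi_term_weight i j)
    (fun=> [::]) (fun a => addeps a (- j%:Z)).
Proof.
move=> ij hj a; rewrite /qcomm.
have /= -> := monomial_action_comp (linear_Dpos hj) (Dpos_action hj) (Psi_term_action ij hj) a.
have /= -> := monomial_action_comp (linear_Psi_term i hj) (Psi_term_action ij hj) (Dpos_action hj) a.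
rewrite /qnum_prod /= !big_seq1 big_nil mulr1.
have [aj0 | [b ->]] := addeps_cases a j%:Z.
  rewrite aj0 qnum0 mulr0 scale0r scaler0 subr0; push_subeps.
  have -> : addeps (addeps a j%:Z) (- j%:Z) j%:Z = 1%N by rewrite /addeps; lia.
  rewrite qnum1 mulr1; congr (q ^ _ *: _).
  by rewrite /qcomm_Dpos_Psi_term_weight /Psi_term_weight /Dpos_weight; weight_lia.
push_subeps; rewrite scalerA -scalerBl; congr (_ *: _).
apply: (qnumS_sub_eq (c := (b j%:Z).+1)); try by rewrite /addeps; lia.
  by rewrite /Psi_term_weight /Dpos_weight; weight_lia.
by rewrite /qcomm_Dpos_Psi_term_weight /Psi_term_weight /Dpos_weight; weight_lia.
Qed.

Ltac terms_match_lia :=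
  right; push_subeps; split;
  [ rewrite ?/XRneg_lead_weight ?/XRneg_tail_weight ?/qcomm_Dpos_Psi_term_weight
      ?/Psi_term_weight ?/Dpos_weight; weight_lia
  | rewrite /= /addeps /=; by [] || (congr [:: _]; lia) || (congr [:: _; _]; lia)
  | move=> t; rewrite /addeps /=; lia ].

Ltac zero_term_lia := left; rewrite /= !inE /addeps /subeps ?eqxx; lia.

Lemma Dpos_Psi_term_qcommute (i j l : nat) : (1 <= j)%N -> (i <= l)%N -> (j < l <= n)%N ->
  forall f, Dpos j (Psi_term i l f) = q ^ 1 *: Psi_term i l (Dpos j f).
Proof.
move=> j1 il hjl; have [hj hl] : (1 <= j <= n)%N /\ (1 <= l <= n)%N by lia.
apply: (monomial_actions_qcommute (linear_Dpos hj) (linear_Psi_term i hl)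
  (Dpos_action hj) (Psi_term_action il hl)) => a.
by have [aj0 | [b ->]] := addeps_cases a j%:Z; [zero_term_lia | terms_match_lia].
Qed.

Lemma XRneg_lead_Psi_term_qcommute (i j l : nat) : (1 <= i <= l)%N -> (l < j <= n)%N ->
  forall f, XRneg_lead j (Psi_term i l f) = q ^ 1 *: Psi_term i l (XRneg_lead j f).
Proof.
move=> il hlj; have [hj hl il'] : [/\ (1 <= j <= n)%N, (1 <= l <= n)%N & (i <= l)%N].
  by split; lia.
apply: (monomial_actions_qcommute (linear_XRneg_lead hj) (linear_Psi_term i hl)
  (XRneg_lead_action hj) (Psi_term_action il' hl)) => a.
terms_match_lia.
Qed.

Lemma XRneg_lead_Dpos_qcommute (j : nat) : (1 <= j <= n)%N ->
  forall f, XRneg_lead j (Dpos j f) = q ^ (-1) *: Dpos j (XRneg_lead j f).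
Proof.
move=> hj; apply: (monomial_actions_qcommute (linear_XRneg_lead hj) (linear_Dpos hj)
  (XRneg_lead_action hj) (Dpos_action hj)) => a.
by have [aj0 | [b ->]] := addeps_cases a j%:Z; [zero_term_lia | terms_match_lia].
Qed.

Lemma XRneg_tail_Dpos_qcommute (j m : nat) : (1 <= j)%N -> (j < m <= n)%N ->
  forall f, XRneg_tail j m (Dpos j f) = q ^ (-1) *: Dpos j (XRneg_tail j m f).
Proof.
move=> j1 hjm; have [hj hm] : (1 <= j <= n)%N /\ (1 <= m <= n)%N by lia.
apply: (monomial_actions_qcommute (linear_XRneg_tail hj hm) (linear_Dpos hj)
  (XRneg_tail_action j1 hjm) (Dpos_action hj)) => a.
have [aj0 | [b ->]] := addeps_cases a j%:Z; first by zero_term_lia.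
by have [bj0 | [c ->]] := addeps_cases b j%:Z; [zero_term_lia | terms_match_lia].
Qed.

Lemma XRneg_tail_Psi_term_qcommute (i j l m : nat) : (1 <= i <= l)%N -> (l < j)%N ->
  (j < m <= n)%N ->
  forall f, XRneg_tail j m (Psi_term i l f) = q ^ 1 *: Psi_term i l (XRneg_tail j m f).
Proof.
move=> il lj hjm; have [hj hl hm] : [/\ (1 <= j <= n)%N, (1 <= l <= n)%N & (1 <= m <= n)%N].
  by split; lia.
have [j1 il'] : (1 <= j)%N /\ (i <= l)%N by lia.
apply: (monomial_actions_qcommute (linear_XRneg_tail hj hm) (linear_Psi_term i hl)
  (XRneg_tail_action j1 hjm) (Psi_term_action il' hl)) => a.
by have [aj0 | [b ->]] := addeps_cases a j%:Z; [zero_term_lia | terms_match_lia].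
Qed.

Lemma XRneg_lead_qcomm_Dpos_Psi_term_commute (i j : nat) : (1 <= i <= j)%N -> (j <= n)%N ->
  forall f, XRneg_lead j (qcomm q (Dpos j) (Psi_term i j) f)
          = q ^ 0 *: qcomm q (Dpos j) (Psi_term i j) (XRneg_lead j f).
Proof.
move=> ij jn; have hj : (1 <= j <= n)%N by lia.
have ij' : (i <= j)%N by lia.
apply: (monomial_actions_qcommute (linear_XRneg_lead hj)
  (linear_qcomm _ (linear_Dpos hj) (linear_Psi_term i hj))
  (XRneg_lead_action hj) (qcomm_Dpos_Psi_term_action ij' hj)) => a.
terms_match_lia.
Qed.

Lemma XRneg_tail_qcomm_Dpos_Psi_term_commute (i j m : nat) : (1 <= i <= j)%N ->
  (j < m <= n)%N ->
  forall f, XRneg_tail j m (qcomm q (Dpos j) (Psi_term i j) f)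
          = q ^ 0 *: qcomm q (Dpos j) (Psi_term i j) (XRneg_tail j m f).
Proof.
move=> ij hjm; have [hj hm] : (1 <= j <= n)%N /\ (1 <= m <= n)%N by lia.
have [j1 ij'] : (1 <= j)%N /\ (i <= j)%N by lia.
apply: (monomial_actions_qcommute (linear_XRneg_tail hj hm)
  (linear_qcomm _ (linear_Dpos hj) (linear_Psi_term i hj))
  (XRneg_tail_action j1 hjm) (qcomm_Dpos_Psi_term_action ij' hj)) => a.
by have [aj0 | [b ->]] := addeps_cases a j%:Z; [zero_term_lia | terms_match_lia].
Qed.

Lemma Psi_decomposition (i : nat) (g : A) : Psi n q x mu mui i g =
  \sum_(l <- iota i (n.+1 - i)) q ^+ (l - i) *: Psi_term i l g.
Proof.
rewrite /Psi (linear_fun_sum (linear_sqop (linear_tau _))); apply: eq_bigr => l _.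
by rewrite (linear_funZ (linear_sqop (linear_tau _))).
Qed.

Lemma XRneg_decomposition (j : nat) (f : A) : (1 <= j <= n)%N ->
  XRneg n q x mu mui dp j f = XRneg_lead j f
    + \sum_(m <- iota j.+1 (n.+1 - j.+1)) (q ^+ j * qlam q * q ^+ (m - j.+1)) *: XRneg_tail j m f.
Proof.
move=> hj; have hn : - j%:Z \in Iseq n by rewrite mem_Iseq; lia.
have [lL lM] := (linear_sqop (linear_Lam (1 - j%:Z)), linear_sqop (linear_mu hn)).
rewrite /XRneg Psi_decomposition (linear_funD lL) scalerDr; congr (_ + _).
rewrite (linear_funZ lL) (linear_fun_sum lM) (linear_fun_sum lL) !scaler_sumr.
by apply: eq_bigr => m _; rewrite (linear_funZ lM) (linear_funZ lL) !scalerA mulrA.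
Qed.

Lemma linear_XRneg (j : nat) : (1 <= j <= n)%N -> linear (XRneg n q x mu mui dp j).
Proof.
move=> hj c u v; rewrite !XRneg_decomposition //.
have lT : {in iota j.+1 (n.+1 - j.+1), forall m, linear (XRneg_tail j m)}.
  by move=> m; rewrite mem_iota => hm; apply: linear_XRneg_tail => //; lia.
exact: linear_add (linear_XRneg_lead hj) (linear_sum_scale _ lT) c u v.
Qed.

Lemma qcomm_Dpos_Psi_decomposition (i j : nat) (g : A) : (1 <= j <= n)%N ->
  qcomm q (Dpos j) (Psi n q x mu mui i) g =
  \sum_(l <- iota i (n.+1 - i)) q ^+ (l - i) *: qcomm q (Dpos j) (Psi_term i l) g.
Proof.
move=> hj; rewrite /qcomm !Psi_decomposition (linear_fun_sum (linear_Dpos hj)).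
rewrite scaler_sumr -sumrB; apply: eq_bigr => l _.
by rewrite (linear_funZ (linear_Dpos hj)) scalerBr !scalerA mulrC.
Qed.

Lemma XRneg_commute_qcomm_Dpos_Psi_term (i j l : nat) : (1 <= i <= l)%N -> (l <= n)%N ->
  (i <= j <= n)%N -> forall f,
  XRneg n q x mu mui dp j (qcomm q (Dpos j) (Psi_term i l) f)
  = qcomm q (Dpos j) (Psi_term i l) (XRneg n q x mu mui dp j f).
Proof.
move=> il ln ij f; have [hj hl] : (1 <= j <= n)%N /\ (1 <= l <= n)%N by lia.
have lK := linear_qcomm q (linear_Dpos hj) (linear_Psi_term i hl).
have qVq : q ^ (-1) * q ^ 1 = 1 by rewrite -expfzDr // addNr expr0z.
case: (ltngtP j l) => [jl | lj | jl].
- have [j1 il' hjl] : [/\ (1 <= j)%N, (i <= l)%N & (j < l <= n)%N] by split; lia.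
  have K0 g : qcomm q (Dpos j) (Psi_term i l) g = 0.
    by rewrite /qcomm (Dpos_Psi_term_qcommute j1 il' hjl) expr1z subrr.
  by rewrite !K0 (linear_fun0 (linear_XRneg hj)).
- rewrite !XRneg_decomposition // (linear_funD lK) (linear_fun_sum lK); congr (_ + _).
    apply: (commute_qcomm q (linear_XRneg_lead hj) (linear_Dpos hj) (linear_Psi_term i hl) qVq).
      exact: XRneg_lead_Dpos_qcommute.
    by apply: XRneg_lead_Psi_term_qcommute; lia.
  apply: eq_big_seq => m; rewrite mem_iota => hm; rewrite (linear_funZ lK); congr (_ *: _).
  have [hjm hm'] : (j < m <= n)%N /\ (1 <= m <= n)%N by lia.
  apply: (commute_qcomm q (linear_XRneg_tail hj hm') (linear_Dpos hj) (linear_Psi_term i hl) qVq).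
    by apply: XRneg_tail_Dpos_qcommute; lia.
  by apply: XRneg_tail_Psi_term_qcommute; lia.
- subst l; rewrite !XRneg_decomposition // (linear_funD lK) (linear_fun_sum lK).
  rewrite (XRneg_lead_qcomm_Dpos_Psi_term_commute il ln) expr0z scale1r.
  congr (_ + _); apply: eq_big_seq => m; rewrite mem_iota => hm.
  have hjm : (j < m <= n)%N by lia.
  by rewrite (linear_funZ lK) (XRneg_tail_qcomm_Dpos_Psi_term_commute il hjm) expr0z scale1r.
Qed.

Lemma XRneg_commute_qcomm_Dpos_Psi (i j : nat) (f : A) : (1 <= i)%N -> (i <= j <= n)%N ->
  qcomm 1 (XRneg n q x mu mui dp j) (qcomm q (Dpos j) (Psi n q x mu mui i)) f = 0.
Proof.
move=> i1 ij; have hj : (1 <= j <= n)%N by lia.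
rewrite {1}/qcomm scale1r !qcomm_Dpos_Psi_decomposition // (linear_fun_sum (linear_XRneg hj)).
rewrite -sumrB big1_seq // => l; rewrite mem_iota => hl.
rewrite (linear_funZ (linear_XRneg hj)) XRneg_commute_qcomm_Dpos_Psi_term ?subrr //; lia.
Qed.

End QSympOperators.

Theorem corollary5p5
  (k : fieldType) (A : algType k) (n : nat) (q : k)
  (x : int -> A) (mu mui dp : int -> A -> A) :
  [pchar k] =i pred0 ->
  q != 0 ->
  (forall m : nat, (0 < m)%N -> q ^+ m != 1) ->
  (2 <= n)%N ->
  qsymp_relations n q x ->
  normal_monomials_basis n x ->
  basic_operators_spec n q x mu mui dp ->
  forall i j : nat, (1 <= i)%N -> (i <= j)%N -> (j <= n)%N ->
  forall f : A,
    qcomm 1 (XRneg n q x mu mui dp j)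
            (qcomm q (Dpos n mui dp j) (Psi n q x mu mui i)) f = 0.
Proof.
move=> _ q_neq0 q_root _ relations basis operators i j i1 ij jn f.
apply: XRneg_commute_qcomm_Dpos_Psi => //; last by rewrite ij.
exact: q_root.
Qed.
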